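(* Fix an instance of Problem (P) and the blockers $b(i)$ ($1\le i\le n$) determined by running Algorithm 1 on it. Consider the modified algorithm obtained from Algorithm 1 by initializing $y_i=\mathrm{avg}(i,b(i))$ for each $i$ (before the while loop) and deleting the step ''$y_i\leftarrow\mathrm{avg}(i,i^* )$ for all $i_L<i<i^*$'' (so the $y_i$ are never updated). Then the modified algorithm produces the same output $x_1,\dots,x_n$ as Algorithm 1 on this instance.
   Context: Problem (P): given an integer $n\ge1$, reals $0<q_1\le\cdots\le q_n$, $z_1,\dots,z_n>0$ and $K>0$, maximize $\sum_{i=1}^n x_i$ subject to $0\le x_i\le q_i$ for all $i$, $0\le x_1\le\cdots\le x_n$, and $\sum_{i=1}^n z_ix_i\le K$. For $1\le i<j\le n+1$ let $\mathrm{sum}(i,j)=z_i+\cdots+z_{j-1}$ and $\mathrm{avg}(i,j)=\mathrm{sum}(i,j)/(j-i)$. Algorithm 1: Initialize $S=\{0,n+1\}$, $y_i=\mathrm{avg}(i,n+1)$ and $x_i=0$ for $i=1,\dots,n$, and $\hat B=K$. While $\hat B>0$ and $S\ne\{0,1,\dots,n+1\}$, perform an iteration: let $i^*$ be the index $i\in\{1,\dots,n\}\setminus S$ minimizing $y_i$, ties broken in favour of the smallest index; let $i_L=\max\{j\in S:j<i^*\}$ and $i_R=\min\{j\in S:j>i^*\}$; set $d=\min\{\hat B/((i_R-i^* )y_{i^*}),\ q_{i^*}-x_{i^*}\}$; set $\hat B\leftarrow\hat B-d(i_R-i^* )y_{i^*}$; set $x_i\leftarrow x_i+d$ for all $i^*\le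 i<i_R$; set $y_i\leftarrow\mathrm{avg}(i,i^* )$ for all $i_L<i<i^*$; add $i^*$ to $S$. When the loop ends, output $x_1,\dots,x_n$. Blocker: for $1\le i\le n$, $b(i)$ is the value of $i^*$ in the last iteration of Algorithm 1 in which $y_i$ is updated (i.e. the last iteration with $i_L<i<i^*$); if $y_i$ is never updated, $b(i)=n+1$. *)

From HB Require Import structures.
From mathcomp Require Import all_boot all_order all_algebra.
Set Implicit Arguments. Unset Strict Implicit. Unset Printing Implicit Defensive.
Import Order.TTheory GRing.Theory Num.Theory.
Local Open Scope ring_scope.

Definition zsum (R : realFieldType) (z : nat -> R) (i j : nat) : R :=
  \sum_(i <= k < j) z k.

Definition avg (R : realFieldType) (z : nat -> R) (i j : nat) : R :=
  zsum z i j / (j - i)%:R.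

(* State of the algorithm: the set S, the y_i, the x_i, the budget B^,
   and a trace recording, for each performed iteration, the pair (i*, i_L). *)
Record alg_state (R : realFieldType) := AlgState {
  st_S : seq nat;
  st_y : nat -> R;
  st_x : nat -> R;
  st_B : R;
  st_trace : seq (nat * nat)
}.

(* One iteration of the while loop (identity if the loop guard fails).
   [upd] = true: Algorithm 1 (y_i updated); [upd] = false: y never updated. *)
Definition alg_step (R : realFieldType) (upd : bool) (n : nat)
    (q z : nat -> R) (s : alg_state R) : alg_state R :=
  let S := st_S s in
  let y := st_y s in
  let x := st_x s in
  let B := st_B s in
  let cand := [seq i <- iota 1 n | i \notin S] in
  if (0 < B) && (cand != [::]) then
    (* smallest index among the minimisers of y over {1..n} \ S *)
    let istar := nth 0%N [seq i <- cand | all (fun j => y i <= y j) cand] 0 in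
    let iL := last 0%N [seq j <- iota 0 istar | j \in S] in
    let iR := head n.+1 [seq j <- iota istar.+1 (n.+1 - istar) | j \in S] in
    let d := Num.min (B / ((iR - istar)%:R * y istar)) (q istar - x istar) in
    AlgState (istar :: S)
      (if upd then (fun i => if (iL < i < istar)%N then avg z i istar else y i)
       else y)
      (fun i => if (istar <= i < iR)%N then x i + d else x i)
      (B - d * (iR - istar)%:R * y istar)
      (rcons (st_trace s) (istar, iL))
  else s.

(* Each iteration adds a new element of {1..n} to S, so the loop performs at
   most n iterations; running n steps (idle once the guard fails) is
   exactly the while loop. *)
Definition alg_run (R : realFieldType) (upd : bool) (n : nat)
    (q z : nat -> R) (K : R) (y0 : nat -> R) : alg_state R :=
  iter n (alg_step upd n q z)
    (AlgState [:: 0%N; n.+1] y0 (fun _ => 0) K [::]).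

Definition alg1 (R : realFieldType) (n : nat) (q z : nat -> R) (K : R) :=
  alg_run true n q z K (fun i => avg z i n.+1).

Definition alg1_output (R : realFieldType) (n : nat) (q z : nat -> R) (K : R)
  : nat -> R := st_x (alg1 n q z K).

Definition blocker (R : realFieldType) (n : nat) (q z : nat -> R) (K : R)
    (i : nat) : nat :=
  last n.+1 [seq p.1 | p <- st_trace (alg1 n q z K) & (p.2 < i < p.1)%N].

Definition modified_output (R : realFieldType) (n : nat) (q z : nat -> R) (K : R)
  : nat -> R :=
  st_x (alg_run false n q z K (fun i => avg z i (blocker n q z K i))).

(* In Algorithm 1 the value y_i never decreases, and it is frozen once i enters S.
   Indeed, while i is outside S, y_i = avg(i, k) with k the successor of i in S.
   When j = i* is inserted, an index i_L < i < j has y_i = avg(i, i_R) > y_j =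
   avg(j, i_R); as avg(i, i_R) is a weighted mean of avg(i, j) and avg(j, i_R),
   the new value avg(i, j) exceeds the old one.  At the end y_i = avg(i, b(i)), so
   the static values of the modified algorithm dominate the current values of
   Algorithm 1 and agree with them on S and at i*.  Hence i* is still the first
   minimiser of the static values, and since the rest of an iteration only depends
   on S, x, B and y at i*, both algorithms perform the same iterations. *)

From HB Require Import structures.
From mathcomp Require Import all_boot all_order all_algebra.
From mathcomp Require Import zify ring.
Set Implicit Arguments. Unset Strict Implicit. Unset Printing Implicit Defensive.
Import Order.TTheory GRing.Theory Num.Theory.
Local Open Scope ring_scope.

Definition gap (S : seq nat) (a b : nat) := forall m, (a < m < b)%N -> m \notin S.

Lemma gap_uniq (S : seq nat) a k1 k2 :
  (a < k1)%N -> (a < k2)%N -> k1 \in S -> k2 \in S -> gap S a k1 -> gap S a k2 ->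
  k1 = k2.
Proof.
move=> ak1 ak2 k1S k2S g1 g2; case: (ltngtP k1 k2) => // [lt12|lt21].
  by move: (g2 k1); rewrite ak1 lt12 k1S => /(_ isT).
by move: (g1 k2); rewrite ak2 lt21 k2S => /(_ isT).
Qed.

Lemma last_filter_iota0 (P : pred nat) m : P 0%N ->
  let l := last 0%N [seq j <- iota 0 m.+1 | P j] in
  [/\ P l, (l <= m)%N & forall j, (l < j <= m)%N -> ~~ P j].
Proof.
move=> P0; elim: m => [|m IH]; first by rewrite /= P0; split=> // j; lia.
rewrite -[m.+2]addn1 iotaD filter_cat last_cat add0n.
case: IH; set l := last 0%N _ => Pl lm gapl /=.
case Pm: (P m.+1) => /=; first by split=> // j; lia.
split=> // [|j /andP[lj]]; first lia.
rewrite leq_eqVlt ltnS => /orP[/eqP->|jm]; first by rewrite Pm.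
by apply: gapl; rewrite lj.
Qed.

Lemma head_filter_iota (P : pred nat) x0 a len : P (a + len.+1)%N ->
  let h := head x0 [seq j <- iota a.+1 len.+1 | P j] in
  [/\ P h, (a < h <= a + len.+1)%N & forall j, (a < j < h)%N -> ~~ P j].
Proof.
elim: len a => [|len IH] a.
  by rewrite addn1 /= => Pa; rewrite Pa /=; split=> [||j]; lia.
rewrite -addSnnS; move: (IH a.+1); set t := iota a.+2 len.+1 => IHa Pend.
have -> : iota a.+1 len.+2 = a.+1 :: t by []; clearbody t.
rewrite /=; case Pa: (P a.+1) => /=; first by split=> [||j]; lia.
have [Ph /andP[ah hl] gaph] := IHa Pend; split=> // [|j /andP[aj jh]].
  by apply/andP; split; lia.
case: (ltngtP j a.+1) => [|ja|->]; [lia | by apply: gaph; rewrite ja | by rewrite Pa].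
Qed.

Definition prev_in (S : seq nat) (i : nat) := last 0%N [seq j <- iota 0 i | j \in S].

Definition next_in (n : nat) (S : seq nat) (i : nat) :=
  head n.+1 [seq j <- iota i.+1 (n.+1 - i) | j \in S].

Lemma prev_inP (S : seq nat) i : 0%N \in S -> (0 < i)%N ->
  [/\ prev_in S i \in S, (prev_in S i < i)%N & gap S (prev_in S i) i].
Proof.
move=> S0; case: i => // i _; have [] := @last_filter_iota0 (fun j => j \in S) i S0.
by rewrite /prev_in => ? ? g; split=> // m /andP[lm mi]; apply: g; rewrite lm.
Qed.

Lemma next_inP n (S : seq nat) i : n.+1 \in S -> (i <= n)%N ->
  [/\ next_in n S i \in S, (i < next_in n S i)%N & gap S i (next_in n S i)].
Proof.
move=> Sn i_n; have len : (n.+1 - i = (n - i).+1)%N by lia.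
have end_n : (i + (n - i).+1 = n.+1)%N by lia.
have [] := @head_filter_iota (fun j => j \in S) n.+1 i (n - i)%N; first by rewrite end_n.
by rewrite /next_in len => ? /andP[? _] g; split.
Qed.

Lemma nth_filter_subpred (T : eqType) (x0 : T) (P Q : pred T) (c : seq T) :
  {in c, forall i, Q i -> P i} -> Q (nth x0 [seq i <- c | P i] 0) ->
  nth x0 [seq i <- c | Q i] 0 = nth x0 [seq i <- c | P i] 0.
Proof.
elim: c => //= a c IH QP; case Pa: (P a) => /=; first by move->.
have -> : Q a = false by apply/negbTE/negP => /(QP a (mem_head _ _)); rewrite Pa.
by move=> Qh; apply: IH => // i ic; apply: QP; rewrite inE ic orbT.
Qed.

Lemma before_nth_filter (P : pred nat) (c : seq nat) j :
  sorted ltn c -> j \in c -> (j < nth 0%N [seq i <- c | P i] 0)%N -> ~~ P j.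
Proof.
elim: c => //= a c IH a_c; rewrite inE => /orP[/eqP->|jc].
  by case: (P a) => //=; rewrite ltnn.
case: (P a) => /=; last exact: IH (path_sorted a_c) jc.
by have := allP (order_path_min ltn_trans a_c) j jc => /= aj ja; lia.
Qed.

Definition first_argmin (R : realFieldType) (y : nat -> R) (c : seq nat) :=
  nth 0%N [seq i <- c | all (fun j => y i <= y j) c] 0.

Lemma first_argminP (R : realFieldType) (y : nat -> R) (c : seq nat) : c != [::] ->
  first_argmin y c \in c /\ all (fun j => y (first_argmin y c) <= y j) c.
Proof.
move=> c0; suff : first_argmin y c \in [seq i <- c | all (fun j => y i <= y j) c].
  by rewrite mem_filter => /andP[].
rewrite mem_nth // size_filter -has_count; apply/hasP.
elim: c c0 => // a c IH _; case: (eqVneq c [::]) => [->|/IH[i ic imin]].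
  by exists a; rewrite ?mem_head //= lexx.
have [ai|ia] := leP (y a) (y i).
  exists a; rewrite ?mem_head //= lexx /=; apply/allP => j /(allP imin).
  exact: le_trans.
by exists i; rewrite ?inE ?ic ?orbT //= (ltW ia).
Qed.

Lemma first_argmin_lt (R : realFieldType) (y : nat -> R) (c : seq nat) j :
  sorted ltn c -> j \in c -> (j < first_argmin y c)%N -> y (first_argmin y c) < y j.
Proof.
move=> c_sorted jc lt_j; have c0 : c != [::] by apply: contraTneq jc => ->.
have [_ /allP mmin] := first_argminP y c0.
have /allPn[k kc] := before_nth_filter c_sorted jc lt_j.
by rewrite -ltNge; apply: le_lt_trans (mmin k kc).
Qed.

Lemma first_argmin_raise (R : realFieldType) (y y' : nat -> R) (c : seq nat) :
  (forall i, y i <= y' i) -> y' (first_argmin y c) = y (first_argmin y c) ->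
  first_argmin y' c = first_argmin y c.
Proof.
move=> le_yy' eq_m; case: (eqVneq c [::]) => [-> //|c0].
have [mc /allP mmin] := first_argminP y c0.
apply: nth_filter_subpred => [i ic /allP imin|]; apply/allP => j jc.
  by apply: le_trans (le_yy' i) _; rewrite (le_trans (imin _ mc)) // eq_m mmin.
by rewrite eq_m (le_trans (mmin j jc)).
Qed.

(* avg(i, b) is the mean of avg(i, a) and avg(a, b) weighted by a - i and b - a. *)
Lemma avg_prefix_gt (R : realFieldType) (z : nat -> R) i a b : (i < a < b)%N ->
  avg z a b < avg z i b -> avg z i b < avg z i a.
Proof.
case/andP => ia ab.
have sum_cat : zsum z i b = zsum z i a + zsum z a b.
  by rewrite /zsum (big_cat_nat (ltnW ia) (ltnW ab)).
have len_cat : (b - i)%:R = (a - i)%:R + (b - a)%:R :> R.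
  by rewrite -natrD; congr _%:R; lia.
have p_gt0 : 0 < (a - i)%:R :> R by rewrite ltr0n subn_gt0.
have r_gt0 : 0 < (b - a)%:R :> R by rewrite ltr0n subn_gt0.
rewrite /avg sum_cat len_cat; move: p_gt0 r_gt0.
move: (zsum z i a) (zsum z a b) (a - i)%:R (b - a)%:R => s1 s2 p r p_gt0 r_gt0.
have cross (u v w t : R) : 0 < w -> 0 < t -> (u / w < v / t) = (u * t < v * w).
  by move=> w_gt0 t_gt0; rewrite ltr_pdivlMr // mulrAC ltr_pdivrMr.
rewrite !cross ?addr_gt0 // => lt_suffix; rewrite -subr_gt0.
have -> : s1 * (p + r) - (s1 + s2) * p = (s1 + s2) * r - s2 * (p + r) by ring.
by rewrite subr_gt0.
Qed.

Definition cand (n : nat) (S : seq nat) := [seq i <- iota 1 n | i \notin S].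

Lemma mem_cand n S i : (i \in cand n S) = [&& (1 <= i <= n)%N & i \notin S].
Proof. by rewrite mem_filter mem_iota andbC; congr (_ && _); apply/idP/idP; lia. Qed.

Lemma sorted_cand n S : sorted ltn (cand n S).
Proof. exact/(sorted_filter ltn_trans)/iota_ltn_sorted. Qed.

Lemma alg_stepE (R : realFieldType) upd n (q z : nat -> R) s :
  alg_step upd n q z s =
  if (0 < st_B s) && (cand n (st_S s) != [::]) then
    let i := first_argmin (st_y s) (cand n (st_S s)) in
    let iL := prev_in (st_S s) i in
    let iR := next_in n (st_S s) i in
    let d := Num.min (st_B s / ((iR - i)%:R * st_y s i)) (q i - st_x s i) in
    AlgState (i :: st_S s)
      (if upd then (fun j => if (iL < j < i)%N then avg z j i else st_y s j)
       else st_y s)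
      (fun j => if (i <= j < iR)%N then st_x s j + d else st_x s j)
      (st_B s - d * (iR - i)%:R * st_y s i)
      (rcons (st_trace s) (i, iL))
  else s.
Proof. by []. Qed.

Lemma alg_step_static_y (R : realFieldType) n (q z : nat -> R) s :
  st_y (alg_step false n q z s) = st_y s.
Proof. by rewrite alg_stepE; case: ifP. Qed.

Lemma alg_step_S_sub (R : realFieldType) upd n (q z : nat -> R) s :
  {subset st_S s <= st_S (alg_step upd n q z s)}.
Proof. by rewrite alg_stepE; case: ifP => _ i iS //; rewrite inE iS orbT. Qed.

Definition same_but_y (R : realFieldType) (s m : alg_state R) :=
  [/\ st_S m = st_S s, st_x m = st_x s & st_B m = st_B s].

Lemma alg_step_sim (R : realFieldType) n (q z : nat -> R) s m :
  same_but_y s m -> (forall i, st_y s i <= st_y m i) ->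
  {in st_S (alg_step true n q z s), st_y m =1 st_y s} ->
  same_but_y (alg_step true n q z s) (alg_step false n q z m).
Proof.
case=> eS eX eB le_y eq_y; rewrite /same_but_y !alg_stepE eS eX eB in eq_y *.
case: ifP eq_y => //= _; set i := first_argmin (st_y s) _ => eq_y.
have eq_i : st_y m i = st_y s i by apply: eq_y; rewrite mem_head.
by rewrite (first_argmin_raise le_y eq_i) eq_i.
Qed.

Definition alg_inv (R : realFieldType) (n : nat) (z : nat -> R) (s : alg_state R) :=
  [/\ 0%N \in st_S s, n.+1 \in st_S s &
   forall i, (1 <= i <= n)%N -> i \notin st_S s ->
     exists2 k, [/\ (i < k)%N, k \in st_S s & gap (st_S s) i k] & st_y s i = avg z i k].

Section Step.
Variables (R : realFieldType) (n : nat) (q z : nat -> R) (s : alg_state R).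
Hypothesis s_inv : alg_inv n z s.

Local Notation S := (st_S s).
Local Notation y := (st_y s).
Local Notation istar := (first_argmin y (cand n S)).
Local Notation iL := (prev_in S istar).
Local Notation iR := (next_in n S istar).

Lemma istar_range : cand n S != [::] -> [/\ (1 <= istar)%N, (istar <= n)%N & istar \notin S].
Proof. by case/(first_argminP y); rewrite mem_cand => /andP[/andP[]]. Qed.

Lemma iL_spec : cand n S != [::] -> [/\ iL \in S, (iL < istar)%N & gap S iL istar].
Proof. by case/istar_range => i_gt0 _ _; case: s_inv => S0 _ _; apply: prev_inP. Qed.

Lemma iR_spec : cand n S != [::] -> [/\ iR \in S, (istar < iR)%N & gap S istar iR].
Proof. by case/istar_range => _ i_n _; case: s_inv => _ Sn _; apply: next_inP. Qed.

Lemma y_between_iL_istar i : cand n S != [::] -> (iL < i <= istar)%N -> y i = avg z i iR.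
Proof.
move=> c0 /andP[Li i_ist]; have [_ i_n istarS] := istar_range c0.
have [_ Li' gL] := iL_spec c0; have [RS ist_R gR] := iR_spec c0.
have iS : i \notin S.
  by case: ltngtP i_ist => // [i_lt _|-> _ //]; apply: gL; rewrite Li.
have [_ _ yS] := s_inv; have [k [ik kS gk] ->] := yS i (ltac:(lia)) iS; congr avg.
apply: gap_uniq ik _ kS RS gk _; first lia.
move=> m /andP[im mR]; case: (ltngtP m istar) => [m_lt|m_gt|->] //.
- by apply: gL; rewrite m_lt (ltn_trans Li im).
- by apply: gR; rewrite m_gt.
Qed.

Lemma alg_step_inv : alg_inv n z (alg_step true n q z s).
Proof.
rewrite alg_stepE; case: ifP => [/andP[_ c0]|_] //; rewrite /alg_inv /=.
have [S0 Sn yS] := s_inv; have [LS Li gL] := iL_spec c0.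
split; rewrite ?inE ?S0 ?Sn ?orbT // => i i1n; rewrite inE negb_or => /andP[ni iS].
case: ifP => [/andP[Li' i_ist]|not_between].
  exists istar; rewrite ?mem_head //; split=> // m /andP[im m_ist].
  by rewrite inE negb_or neq_ltn m_ist gL // (ltn_trans Li' im).
have [k [ik kS gk] yk] := yS i i1n iS; exists k => //.
split; rewrite ?inE ?kS ?orbT // => m /andP[im mk]; rewrite inE negb_or gk ?im // andbT.
apply/eqP => m_ist; rewrite {m}m_ist in im mk.
have iL_i : iL != i by apply: contraNneq iS => <-.
have i_iL : (i < iL)%N by move/negbT: not_between iL_i; lia.
by move: (gk iL); rewrite LS i_iL (ltn_trans Li mk) => /(_ isT).
Qed.

Lemma alg_step_y_le i : y i <= st_y (alg_step true n q z s) i.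
Proof.
rewrite alg_stepE; case: ifP => [/andP[_ c0]|_] /=; last exact: lexx.
case: ifP => [/andP[Li i_ist]|_]; last exact: lexx.
have [_ Li' gL] := iL_spec c0; have [_ ist_R _] := iR_spec c0.
have [_ ist_n _] := istar_range c0.
have ic : i \in cand n S.
  by rewrite mem_cand gL ?Li // andbT (leq_ltn_trans (leq0n iL) Li) ltnW // (leq_trans i_ist).
have := first_argmin_lt (sorted_cand n S) ic i_ist.
have y_i : y i = avg z i iR by apply: y_between_iL_istar; rewrite // Li ltnW.
have y_ist : y istar = avg z istar iR by apply: y_between_iL_istar; rewrite // Li' leqnn.
rewrite y_i y_ist => lt_y.
by apply/ltW; apply: avg_prefix_gt lt_y; rewrite i_ist.
Qed.

Lemma alg_step_y_frozen :
  {in st_S (alg_step true n q z s), st_y (alg_step true n q z s) =1 y}.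
Proof.
rewrite alg_stepE; case: ifP => [/andP[_ c0]|_] //= i.
have [_ _ gL] := iL_spec c0.
rewrite inE => /orP[/eqP->|iS]; first by rewrite ltnn andbF.
by case: ifP => // /gL; rewrite iS.
Qed.

End Step.

Definition y_traced (R : realFieldType) (n : nat) (z : nat -> R) (s : alg_state R) :=
  forall i, st_y s i = avg z i (last n.+1 [seq p.1 | p <- st_trace s & (p.2 < i < p.1)%N]).

Lemma alg_step_traced (R : realFieldType) n (q z : nat -> R) s :
  y_traced n z s -> y_traced n z (alg_step true n q z s).
Proof.
move=> s_traced i; rewrite alg_stepE; case: ifP => //= _.
by rewrite filter_rcons /=; case: ifP => _; rewrite ?map_rcons ?last_rcons.
Qed.

Section Run.
Variables (R : realFieldType) (n : nat) (q z : nat -> R) (K : R).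

Definition run (upd : bool) (y0 : nat -> R) (t : nat) : alg_state R :=
  iter t (alg_step upd n q z) (AlgState [:: 0%N; n.+1] y0 (fun _ => 0) K [::]).

Local Notation run1 := (run true (fun i => avg z i n.+1)).

Lemma run1_inv t : alg_inv n z (run1 t).
Proof.
elim: t => [|t IH]; last exact: alg_step_inv.
split; rewrite ?inE ?eqxx ?orbT // => i /andP[_ i_n] _.
exists n.+1 => //; split; rewrite ?inE ?eqxx ?orbT ?ltnS //.
by move=> m /andP[im mn]; rewrite !inE; lia.
Qed.

Lemma run1_y_le i : {homo run1 : t t' / (t <= t')%N >-> st_y t i <= st_y t' i}.
Proof.
apply: homo_leq => [s|s1 s2 s3|t]; [exact: lexx | exact: le_trans |].
exact: alg_step_y_le (run1_inv t) i.
Qed.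

Lemma run1_frozen : {homo run1 : t t' / (t <= t')%N >->
  {subset st_S t <= st_S t'} /\ {in st_S t, st_y t' =1 st_y t}}.
Proof.
apply: homo_leq => [s|s2 s1 s3 [sub12 eq12] [sub23 eq23]|t]; first by split.
  by split=> [i /sub12/sub23 //| i iS]; rewrite eq23 ?eq12 ?sub12.
split=> [|i /(alg_step_S_sub true n q z) iS']; first exact: alg_step_S_sub.
exact: alg_step_y_frozen (run1_inv t) i iS'.
Qed.

Lemma run1_traced t : y_traced n z (run1 t).
Proof. by elim: t => [|t IH] // i; apply: alg_step_traced. Qed.

Lemma run_static_y y0 t : st_y (run false y0 t) = y0.
Proof. by elim: t => //= t IH; rewrite alg_step_static_y. Qed.

Local Notation y_blocker := (fun i => avg z i (blocker n q z K i)).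

Lemma modified_run_sim t : (t <= n)%N -> same_but_y (run1 t) (run false y_blocker t).
Proof.
have y_final : st_y (run1 n) =1 y_blocker by move=> i; apply: run1_traced.
elim: t => [|t IH] t_n; first by [].
apply: alg_step_sim; first exact: IH (ltnW t_n).
  by move=> i; rewrite run_static_y -y_final; apply: run1_y_le; apply: ltnW.
move=> i iS; rewrite run_static_y -y_final.
by rewrite (run1_frozen t_n).2 // (alg_step_y_frozen (run1_inv t)).
Qed.

End Run.

Unset Implicit Arguments.

Theorem lemma6 (R : realFieldType) (n : nat) (q z : nat -> R) (K : R) :
  (1 <= n)%N ->
  0 < q 1%N ->
  (forall i, (1 <= i < n)%N -> q i <= q i.+1) ->
  (forall i, (1 <= i <= n)%N -> 0 < z i) ->
  0 < K ->
  forall i, (1 <= i <= n)%N -> modified_output n q z K i = alg1_output n q z K i.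
Proof.
move=> _ _ _ _ _ i _.
by have [_ eq_x _] := modified_run_sim q z K (leqnn n); rewrite /modified_output eq_x.
Qed.
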